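(* Let $A$ be an $n$-by-$n$ doubly nonnegative matrix. Then there is an $\epsilon>0$ such that $(\epsilon A+I)^t$ is doubly nonnegative for all $t\ge n-2$.
   Context: A real matrix is doubly nonnegative if it is symmetric, positive semidefinite, and entry-wise nonnegative. For a positive definite matrix $B=\sum_i\mu_ix_ix_i^T$ (orthonormal eigenvectors, $\mu_i>0$) and real $t$, $B^t=\sum_i\mu_i^tx_ix_i^T$. *)

From HB Require Import structures.
From mathcomp Require Import all_boot all_order all_algebra.
From mathcomp Require Import boolp reals exp.
Set Implicit Arguments. Unset Strict Implicit. Unset Printing Implicit Defensive.
Import Order.TTheory GRing.Theory Num.Theory.
Local Open Scope ring_scope.

Section Defs.
Variable R : realType.

Definition doubly_nonnegative n (B : 'M[R]_n) : Prop :=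
  [/\ B^T = B,
      (forall x : 'cV[R]_n, 0 <= (x^T *m B *m x) 0 0)
    & (forall i j, 0 <= B i j)].

Definition pos_spectral_decomp n (B Q : 'M[R]_n) (mu : 'rV[R]_n) : Prop :=
  [/\ Q^T *m Q = 1%:M, (forall i, 0 < mu 0 i) & B = Q *m diag_mx mu *m Q^T].

Definition pd_decomp_exists n (B : 'M[R]_n) : Prop :=
  exists p : 'M[R]_n * 'rV[R]_n, pos_spectral_decomp B p.1 p.2.

(* B^t = sum_i mu_i^t x_i x_i^T for a positive definite B (chosen
   decomposition; the value does not depend on the choice).  For B not
   positive definite we return 0 (never used in the theorem). *)
Definition mpowr n (B : 'M[R]_n) (t : R) : 'M[R]_n :=
  match pselect (pd_decomp_exists B) with
  | left h => let p := projT1 (cid h) in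
      p.1 *m diag_mx (map_mx (fun m => powR m t) p.2) *m p.1^T
  | right _ => 0
  end.

End Defs.

From HB Require Import structures.
From mathcomp Require Import all_boot all_order all_algebra.
From mathcomp Require Import boolp reals exp.
From mathcomp Require Import classical_sets functions topology normedtype derive realfun.
From mathcomp Require Import ring lra.
Import Order.TTheory GRing.Theory Num.Theory numFieldNormedType.Exports.
Set Implicit Arguments.
Unset Strict Implicit.
Unset Printing Implicit Defensive.
Local Open Scope ring_scope.

(* Write A = Q diag(l) Q^T.  The (i, j) entry of (eps A + I)^s is
   sum_k c_k (1 + eps l_k)^s with c_k = Q_ik Q_jk, and its moments
   sum_k c_k l_k^r are the entries (A^r)_ij >= 0.  Take n - 2 <= s < n - 1.
   If the moments of order < n all vanish, so does the entry.  Otherwise let d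
   be the first order with (A^d)_ij > 0: the d-th eps-derivative of the entry is
   a positive multiple of sum_k c_k l_k^d (1 + eps l_k)^(s - d), which stays
   close to (A^d)_ij for eps small, uniformly in s; the lower derivatives vanish
   at eps = 0 and carry the nonnegative factors s - r, so integrating back up
   keeps the entry nonnegative.  A general t >= n - 2 is k + s with k natural,
   and (eps A + I)^k is entrywise nonnegative. *)

Lemma expr1D_le_lin {R : realFieldType} (N : nat) (z : R) : 0 <= z <= 1 ->
  (1 + z) ^+ N <= 1 + 3 ^+ N * z.
Proof.
move=> /andP[z0 z1]; elim: N => [|N IH]; first by rewrite !expr0 mul1r; lra.
have pow3_ge1 : 1 <= 3 ^+ N :> R by apply: exprn_ege1; lra.
rewrite exprSr exprS; apply: le_trans (_ : (1 + 3 ^+ N * z) * (1 + z) <= _).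
  by rewrite ler_wpM2r // addr_ge0.
set x := 3 ^+ N in pow3_ge1 *.
have : 0 <= x * z * (1 - z) by rewrite !mulr_ge0 ?subr_ge0 //; lra.
have : 0 <= z * (x - 1) by rewrite mulr_ge0 ?subr_ge0.
nra.
Qed.

Lemma powR1D_sub1_le {R : realType} (N : nat) (z a : R) : 0 <= z <= 1 ->
  -1 <= a <= N%:R -> `|(1 + z) `^ a - 1| <= 3 ^+ N * z.
Proof.
move=> /andP[z0 z1] /andP[a1 aN].
have z1_ge1 : 1 <= 1 + z by rewrite lerDl.
have z_le : z <= 3 ^+ N * z by rewrite ler_peMl // exprn_ege1 // ler1n.
have [a0|a0] := lerP 0 a.
- have lo : 1 <= (1 + z) `^ a by rewrite -{1}(powRr0 (1 + z)) ler_powR.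
  have hi : (1 + z) `^ a <= (1 + z) ^+ N.
    by rewrite -powR_mulrn ?addr_ge0 // ler_powR.
  have := @expr1D_le_lin _ N z; rewrite z0 z1 => /(_ isT).
  rewrite ger0_norm ?subr_ge0 //; lra.
- have hi : (1 + z) `^ a <= 1.
    by rewrite -[leRHS](powRr0 (1 + z)) ler_powR // ltW.
  have lo : (1 + z)^-1 <= (1 + z) `^ a.
    by rewrite -powR_inv1 ?addr_ge0 // ler_powR.
  have : 1 - (1 + z)^-1 <= z.
    have -> : 1 - (1 + z)^-1 = z / (1 + z) by field; lra.
    rewrite ler_pdivrMr; [nra | lra].
  rewrite ler0_norm ?subr_le0 // opprB; lra.
Qed.

Section Moments.
Variables (R : realType) (m : nat) (c l : 'I_m -> R).

Definition moment (r : nat) : R := \sum_k c k * l k ^+ r.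

Section VanishingMoments.
Hypothesis moment_eq0 : forall r : nat, (r < m)%N -> moment r = 0.

Lemma sum_horner_eq0 (p : {poly R}) : (size p <= m)%N -> \sum_k c k * p.[l k] = 0.
Proof.
move=> sp; under eq_bigr do rewrite horner_coef mulr_sumr.
rewrite exchange_big big1 // => i _.
transitivity (p`_i * moment i).
  by rewrite mulr_sumr; apply: eq_bigr => k _; rewrite mulrCA.
by rewrite moment_eq0 ?mulr0 // (leq_trans (ltn_ord i) sp).
Qed.

Lemma sum_level_eq0 k0 : \sum_(k | l k == l k0) c k = 0.
Proof.
pose P j := l j != l k0.
pose p := \prod_(j | P j) ('X - (l j)%:P).
have sp : (size p <= m)%N.
  rewrite /p -big_filter size_prod_XsubC size_filter.
  have size_m : size (index_enum 'I_m) = m by rewrite /index_enum -enumT size_enum_ord.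
  rewrite -[X in (_ < X)%N]size_m -(count_predC P).
  rewrite -[X in (X < _)%N]addn0 ltn_add2l -has_count.
  by apply/hasP; exists k0; rewrite ?mem_index_enum //= /P negbK.
have := @sum_horner_eq0 p sp.
rewrite (bigID (fun k => l k == l k0)) /= [X in _ + X]big1 ?addr0 => [|k lk]; last first.
  by rewrite horner_prod (bigD1 k) //= hornerXsubC subrr mul0r mulr0.
under eq_bigr => k /eqP lk do rewrite lk.
rewrite -mulr_suml => /eqP; rewrite mulf_eq0 => /orP[/eqP //|].
rewrite horner_prod prodf_seq_eq0 => /hasP[j _ /andP[Pj]].
by rewrite hornerXsubC subr_eq0 eq_sym (negbTE Pj).
Qed.

Lemma sum_eq0_of_moments (g : R -> R) : \sum_k c k * g (l k) = 0.
Proof.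
pose N k : R := #|[pred j | l j == l k]|%:R.
have N_neq0 k : N k != 0 by rewrite pnatr_eq0 -lt0n; apply/card_gt0P; exists k; rewrite inE /=.
transitivity (\sum_k0 g (l k0) / N k0 * \sum_(k | l k == l k0) c k); last first.
  by apply: big1 => k0 _; rewrite sum_level_eq0 mulr0.
under [RHS]eq_bigr do rewrite mulr_sumr big_mkcond.
rewrite exchange_big; apply: eq_bigr => k _.
transitivity (\sum_(k0 | l k0 == l k) c k * g (l k) / N k).
  by rewrite sumr_const -mulr_natr mulfVK.
rewrite big_mkcond; apply: eq_bigr => k0 _; rewrite eq_sym.
have [lk|] := eqP; last by [].
by rewrite /N lk; ring.
Qed.

End VanishingMoments.

(* By is_derive_tilted_moment, the r-th derivative of tilted_moment s 0 is
   s (s - 1) ... (s - r + 1) tilted_moment s r. *)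
Definition tilted_moment (s : R) (r : nat) (y : R) : R :=
  \sum_k c k * l k ^+ r * (1 + y * l k) `^ (s - r%:R).

Lemma tilted_moment_at0 (s : R) r : tilted_moment s r 0 = moment r.
Proof. by apply: eq_bigr => k _; rewrite mul0r addr0 powR1 mulr1. Qed.

Lemma tilted_moment0 (s y : R) : tilted_moment s 0 y = \sum_k c k * (1 + y * l k) `^ s.
Proof. by apply: eq_bigr => k _; rewrite expr0 mulr1 subr0. Qed.

Section TiltedMoments.
Hypothesis l_ge0 : forall k, 0 <= l k.

Lemma is_derive_tilted_moment (s : R) r (x : R) : 0 <= x ->
  is_derive x 1 (tilted_moment s r) ((s - r%:R) * tilted_moment s r.+1 x).
Proof.
move=> x0.
have der_term k : is_derive x 1 (fun y => c k * l k ^+ r * (1 + y * l k) `^ (s - r%:R))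
    (c k * l k ^+ r * ((s - r%:R) * (1 + x * l k) `^ (s - r%:R - 1) * l k)).
  have lin_pos : 0 < 1 + x * l k by rewrite ltr_pwDl // mulr_ge0.
  have lin : is_derive x 1 (fun y : R => 1 + y * l k) (l k).
    by apply: is_derive_eq; rewrite scaler0 !add0r mul1r [LHS]mulr1.
  have := @is_derive1_comp R (fun b : R => b `^ (s - r%:R)) (fun y => 1 + y * l k) x _ _
    (is_derive1_powR _ lin_pos) lin.
  exact: is_deriveZ.
have -> : tilted_moment s r =
    \sum_k (fun y => c k * l k ^+ r * (1 + y * l k) `^ (s - r%:R)).
  by apply/funext => y; rewrite fct_sumE.
apply: is_derive_eq (is_derive_sum der_term) _.
rewrite mulr_sumr; apply: eq_bigr => k _.
rewrite exprS -natr1 (_ : s - r%:R - 1 = s - (r%:R + 1)); ring.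
Qed.

Lemma tilted_moment_ge0_step (s e : R) r : moment r = 0 -> r%:R <= s ->
    (forall y, 0 <= y <= e -> 0 <= tilted_moment s r.+1 y) ->
  forall y, 0 <= y <= e -> 0 <= tilted_moment s r y.
Proof.
move=> mr0 rs ge0_next y /andP[y0 ye].
have der x : 0 <= x -> derivable (tilted_moment s r) x 1.
  by move=> x0; have [] := is_derive_tilted_moment s r x0.
rewrite -(tilted_moment_at0 s r) in mr0; rewrite -mr0.
apply: (@ger0_derive1_le_cc _ _ 0 e) => //; last 2 first.
- by rewrite in_itv /= lexx (le_trans y0 ye).
- by rewrite in_itv /= y0 ye.
- by move=> x; rewrite in_itv /= => /andP[/ltW x0 _]; apply: der.
- move=> x; rewrite in_itv /= => /andP[x0 xe].
  rewrite derive1E; have [_ ->] := is_derive_tilted_moment s r (ltW x0).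
  by rewrite mulr_ge0 ?subr_ge0 // ge0_next // (ltW x0) (ltW xe).
- apply: continuous_in_subspaceT => x; rewrite inE /= in_itv /= => /andP[x0 _].
  exact/differentiable_continuous/derivable1_diffP/der.
Qed.

Lemma tilted_moment_ge0_lift (s e : R) d :
    (forall r, (r < d)%N -> moment r = 0) -> (forall r, (r < d)%N -> r%:R <= s) ->
    (forall y, 0 <= y <= e -> 0 <= tilted_moment s d y) ->
  forall y, 0 <= y <= e -> 0 <= tilted_moment s 0 y.
Proof.
elim: d => [//|d IH] mr0 rs ge0_d; apply: IH => [r rd|r rd|].
- exact/mr0/ltnW.
- exact/rs/ltnW.
- exact: tilted_moment_ge0_step (mr0 _ _) (rs _ _) ge0_d.
Qed.

Section Bounded.
Variable K : R.
Hypotheses (l_le : forall k, l k <= K) (K_ge1 : 1 <= K) (c_le1 : forall k, `|c k| <= 1).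

Lemma tilted_moment_leading_ge0 (s e dl y : R) d N :
    (d <= N)%N -> -1 <= s - d%:R <= N%:R -> dl <= moment d ->
    e * K <= 1 -> e * (m%:R * K ^+ N.+1 * 3 ^+ N) <= dl -> 0 <= y <= e ->
  0 <= tilted_moment s d y.
Proof.
move=> dN sd dl_le eK eC /andP[y0 ye].
have term_le k : `|c k * l k ^+ d * ((1 + y * l k) `^ (s - d%:R) - 1)|
    <= e * (K ^+ N.+1 * 3 ^+ N).
  have z01 : 0 <= y * l k <= 1.
    by rewrite mulr_ge0 //= (le_trans _ eK) // ler_pM.
  have cl_le : `|c k| * l k ^+ d <= K ^+ N.
    rewrite -[leRHS]mul1r ler_pM ?exprn_ge0 //.
    apply: le_trans (ler_weXn2l K_ge1 dN).
    by rewrite lerXn2r ?nnegrE ?l_ge0 ?(le_trans ler01 K_ge1).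
  rewrite (_ : e * _ = K ^+ N * (3 ^+ N * (e * K))); last by rewrite exprSr; ring.
  rewrite !normrM (ger0_norm (exprn_ge0 _ (l_ge0 k))) ler_pM ?mulr_ge0 ?exprn_ge0 //.
  by rewrite (le_trans (powR1D_sub1_le z01 sd)) // ler_wpM2l ?exprn_ge0 // ler_pM.
have -> : tilted_moment s d y =
    moment d + \sum_k c k * l k ^+ d * ((1 + y * l k) `^ (s - d%:R) - 1).
  by rewrite /moment -big_split; apply: eq_bigr => k _ /=; ring.
set err := \sum_k _.
have : `|err| <= dl.
  apply: le_trans (ler_norm_sum _ _ _) (le_trans _ eC).
  rewrite (_ : e * _ = \sum_(k < m) e * (K ^+ N.+1 * 3 ^+ N)); first exact: ler_sum.
  by rewrite sumr_const card_ord -mulr_natr; ring.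
have := ler_norm (- err); rewrite normrN; lra.
Qed.

Lemma sum_powR_ge0 (s e dl : R) :
    (forall r, (r < m)%N -> 0 <= moment r) ->
    (forall r, (r < m)%N -> 0 < moment r -> dl <= moment r) ->
    m%:R - 2 <= s < m%:R - 1 -> 0 <= e -> e * K <= 1 ->
    e * (m%:R * K ^+ m.+1 * 3 ^+ m) <= dl ->
  0 <= \sum_k c k * (1 + e * l k) `^ s.
Proof.
move=> mom_ge0 mom_lb /andP[s_lo s_hi] e0 eK eC; rewrite -tilted_moment0.
have [ex|none] := pselect (exists r, (r < m)%N && (moment r != 0)); last first.
  have mom_eq0 r : (r < m)%N -> moment r = 0.
    by move=> rm; apply/eqP/negP => /negP nz; apply: none; exists r; rewrite rm.
  by rewrite tilted_moment0 (sum_eq0_of_moments mom_eq0 (fun x => (1 + e * x) `^ s)).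
have [d /andP[dm md_neq0] d_min] := ex_minnP ex.
have below_d r : (r < d)%N -> moment r = 0.
  move=> rd; apply/eqP/negP => /negP nz.
  by have := d_min r; rewrite nz (ltn_trans rd dm) leqNgt rd => /(_ isT).
have d_le_s r : (r < d)%N -> r%:R <= s.
  move=> rd; have : (r.+2 <= m)%N by apply: leq_trans dm.
  by rewrite -(ler_nat R) -addn2 natrD; lra.
apply: (@tilted_moment_ge0_lift s e d) => // [y ye|]; last by rewrite e0 lexx.
have d_lt : d%:R + 1 <= m%:R :> R by rewrite natr1 ler_nat.
apply: (@tilted_moment_leading_ge0 s e dl y d m) => //; first exact: ltnW.
- by have d0 := ler0n R d; apply/andP; split; lra.
- by apply: mom_lb => //; rewrite lt_def md_neq0 mom_ge0.
Qed.
End Bounded.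
End TiltedMoments.
End Moments.

Section NonnegMatrices.
Variable R : realDomainType.

Definition nnegmx {m n} (B : 'M[R]_(m, n)) := forall i j, 0 <= B i j.

Lemma nnegmx_mul m n p (A : 'M[R]_(m, n)) (B : 'M[R]_(n, p)) :
  nnegmx A -> nnegmx B -> nnegmx (A *m B).
Proof. by move=> A0 B0 i j; rewrite mxE sumr_ge0 // => k _; rewrite mulr_ge0. Qed.

Lemma nnegmx_exprn n (B : 'M[R]_n) k : nnegmx B -> nnegmx (B ^+ k).
Proof.
move=> B0; elim: k => [|k IH]; first by move=> i j; rewrite mxE ler0n.
by rewrite exprSr -mulmxE; apply: nnegmx_mul.
Qed.

Lemma exists_pos_lower_bound (T : finType) (f : T -> R) :
  exists2 d, 0 < d & forall x, 0 < f x -> d <= f x.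
Proof.
exists (\big[Num.min/1]_(x | 0 < f x) f x).
  by elim/big_rec: _ => // x d fx d0; rewrite lt_min fx.
by move=> x fx; rewrite (bigD1 x) //= ge_min lexx.
Qed.

End NonnegMatrices.
Arguments nnegmx {R m n} B.

Lemma exists_small_pos {R : realFieldType} (a b d : R) : 0 < a -> 0 <= b -> 0 < d ->
  exists e, [/\ 0 < e, e * a <= 1 & e * b <= d].
Proof.
move=> a0 b0 d0; have b1 : 0 < b + 1 by lra.
exists (Num.min a^-1 (d / (b + 1))); split.
- by rewrite lt_min invr_gt0 a0 divr_gt0.
- by rewrite -[leRHS](mulVf (lt0r_neq0 a0)) ler_pM2r // ge_min lexx.
- apply: le_trans (_ : d / (b + 1) * b <= _).
    by apply: ler_wpM2r => //; rewrite ge_min lexx orbT.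
  by rewrite mulrAC ler_pdivrMr // ler_wpM2l ?ltW //; lra.
Qed.

Section Spectral.
Variables (R : realFieldType) (n : nat) (Q : 'M[R]_n).

Lemma spectral_mxE (v : 'rV[R]_n) i j :
  (Q *m diag_mx v *m Q^T) i j = \sum_k Q i k * v 0 k * Q j k.
Proof. by rewrite mul_mx_diag mxE; apply: eq_bigr => k _; rewrite !mxE. Qed.

Lemma trmx_spectral (v : 'rV[R]_n) : (Q *m diag_mx v *m Q^T)^T = Q *m diag_mx v *m Q^T.
Proof. by rewrite !trmx_mul trmxK tr_diag_mx mulmxA. Qed.

Lemma spectral_form_ge0 (v : 'rV[R]_n) (x : 'cV[R]_n) : (forall k, 0 <= v 0 k) ->
  0 <= (x^T *m (Q *m diag_mx v *m Q^T) *m x) 0 0.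
Proof.
move=> v_ge0; set y := Q^T *m x.
have -> : x^T *m (Q *m diag_mx v *m Q^T) *m x = y^T *m diag_mx v *m y.
  by rewrite /y trmx_mul trmxK !mulmxA.
rewrite mxE sumr_ge0 // => k _.
by rewrite mul_mx_diag !mxE mulrAC mulr_ge0 // -expr2 sqr_ge0.
Qed.

Hypothesis Q_orth : Q^T *m Q = 1%:M.

Lemma mul_spectral (u v : 'rV[R]_n) :
  (Q *m diag_mx u *m Q^T) *m (Q *m diag_mx v *m Q^T) =
  Q *m diag_mx (\row_k (u 0 k * v 0 k)) *m Q^T.
Proof.
rewrite -!mulmxA (mulmxA Q^T) Q_orth mul1mx (mulmxA (diag_mx u)) mulmx_diag mulmxA.
by congr (_ *m diag_mx _ *m _); apply/matrixP => i k; rewrite !mxE (ord1 i).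
Qed.

Lemma spectral_exprn (v : 'rV[R]_n) k :
  (Q *m diag_mx v *m Q^T) ^+ k = Q *m diag_mx (map_mx (fun x => x ^+ k) v) *m Q^T.
Proof.
elim: k => [|k IH].
  rewrite expr0 (_ : map_mx _ v = const_mx 1); last by apply/matrixP => i j; rewrite !mxE.
  by rewrite diag_const_mx mulmx1 (mulmx1C Q_orth).
rewrite exprSr IH -[_ * _]/(_ *m _) mul_spectral; congr (_ *m diag_mx _ *m _).
by apply/matrixP => i j; rewrite !mxE (ord1 i) exprSr.
Qed.

Lemma spectral_ge0_of_psd (v : 'rV[R]_n) :
    (forall x : 'cV[R]_n, 0 <= (x^T *m (Q *m diag_mx v *m Q^T) *m x) 0 0) ->
  forall k, 0 <= v 0 k.
Proof.
move=> psd k; have := psd (Q *m delta_mx k 0).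
rewrite trmx_mul !mulmxA -(mulmxA _ Q^T) -(mulmxA _ Q) Q_orth mulmx1.
rewrite -!mulmxA (mulmxA Q^T) Q_orth mul1mx mulmxA mxE (bigD1 k) //= big1 => [|j jk].
  by rewrite addr0 mul_mx_diag !mxE !eqxx mulr1 mul1r.
by rewrite mul_mx_diag !mxE (negbTE jk) andFb mulr0.
Qed.

Lemma mxtrace_spectral (v : 'rV[R]_n) : \tr (Q *m diag_mx v *m Q^T) = \sum_k v 0 k.
Proof. by rewrite -mulmxA mxtrace_mulC -mulmxA Q_orth mulmx1 mxtrace_diag. Qed.

Lemma orthogonal_entry_le1 i k : `|Q i k| <= 1.
Proof.
have : Q i k ^+ 2 <= 1.
  have := congr1 (fun M : 'M[R]_n => M k k) Q_orth; rewrite /= !mxE eqxx mulr1n => <-.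
  rewrite (bigD1 i) //= mxE -expr2 lerDl sumr_ge0 // => j _.
  by rewrite mxE -expr2 sqr_ge0.
by rewrite expr2 ler_norml => sq_le1; apply/andP; split; nra.
Qed.

End Spectral.

Section SmallPerturbation.
Variables (R : realType) (n : nat) (A Q : 'M[R]_n) (mu : 'rV[R]_n) (e dl : R).
Hypotheses (A_psd : forall x : 'cV[R]_n, 0 <= (x^T *m A *m x) 0 0) (A_ge0 : nnegmx A).
Hypotheses (Q_orth : Q^T *m Q = 1%:M) (mu_gt0 : forall k, 0 < mu 0 k).
Hypotheses (e_gt0 : 0 < e) (B_spectral : e *: A + 1%:M = Q *m diag_mx mu *m Q^T).
Hypothesis dl_le : forall r i j : 'I_n, 0 < (A ^+ r) i j -> dl <= (A ^+ r) i j.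
Hypotheses (eK : e * (1 + \tr A) <= 1)
  (eC : e * (n%:R * (1 + \tr A) ^+ n.+1 * 3 ^+ n) <= dl).

Let lam := e^-1 *: (mu - const_mx 1).

Let A_spectral : A = Q *m diag_mx lam *m Q^T.
Proof.
rewrite /lam linearZ linearB /= diag_const_mx -scalemxAr -scalemxAl.
rewrite mulmxBr mulmxBl mulmx1 (mulmx1C Q_orth) -B_spectral addrK scalerA.
by rewrite mulVf ?scale1r // gt_eqF.
Qed.

Let lam_ge0 k : 0 <= lam 0 k.
Proof.
have psd (x : 'cV[R]_n) : 0 <= (x^T *m (Q *m diag_mx lam *m Q^T) *m x) 0 0.
  by rewrite -A_spectral A_psd.
exact (spectral_ge0_of_psd Q_orth psd k).
Qed.

Let lam_le k : lam 0 k <= 1 + \tr A.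
Proof.
have := mxtrace_spectral Q_orth lam; rewrite -A_spectral (bigD1 k) //= => ->.
have : 0 <= \sum_(j | j != k) lam 0 j by rewrite sumr_ge0.
lra.
Qed.

Let moment_spectral i j r :
  moment (fun k => Q i k * Q j k) (fun k => lam 0 k) r = (A ^+ r) i j.
Proof.
rewrite A_spectral spectral_exprn // spectral_mxE.
by apply: eq_bigr => k _; rewrite !mxE; ring.
Qed.

Lemma nnegmx_powR_spectral_window s : n%:R - 2 <= s < n%:R - 1 ->
  nnegmx (Q *m diag_mx (map_mx (fun x => x `^ s) mu) *m Q^T).
Proof.
move=> s_in i j; rewrite spectral_mxE.
have -> : \sum_k Q i k * (map_mx (fun x => x `^ s) mu) 0 k * Q j k =
    \sum_k (Q i k * Q j k) * (1 + e * lam 0 k) `^ s.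
  apply: eq_bigr => k _; rewrite !mxE [e * _]mulrA mulfV ?gt_eqF //.
  by rewrite mul1r subrKC mulrAC.
have K_ge1 : 1 <= 1 + \tr A by rewrite lerDl sumr_ge0.
apply: (@sum_powR_ge0 _ _ _ _ lam_ge0 _ lam_le K_ge1 _ s e dl) => //; last exact: ltW.
- by move=> k; rewrite normrM mulr_ile1 ?normr_ge0 ?(orthogonal_entry_le1 Q_orth).
- by move=> r _; rewrite moment_spectral nnegmx_exprn.
- by move=> r rn; rewrite moment_spectral; apply: (@dl_le (Ordinal rn)).
Qed.

Lemma nnegmx_powR_spectral t : n%:R - 2 <= t ->
  nnegmx (Q *m diag_mx (map_mx (fun x => x `^ t) mu) *m Q^T).
Proof.
move=> t_ge; pose k := Num.truncn (t - (n%:R - 2)); pose s := t - k%:R.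
have s_in : n%:R - 2 <= s < n%:R - 1.
  have := truncnS_gt (t - (n%:R - 2)); have := truncn_le (t - (n%:R - 2)).
  rewrite -/k -natr1 subr_ge0 t_ge /= => k_le k_gt; apply/andP; split; rewrite /s; lra.
have -> : Q *m diag_mx (map_mx (fun x => x `^ t) mu) *m Q^T =
    (Q *m diag_mx mu *m Q^T) ^+ k *m (Q *m diag_mx (map_mx (fun x => x `^ s) mu) *m Q^T).
  rewrite spectral_exprn // mul_spectral //; congr (_ *m diag_mx _ *m _).
  apply/matrixP => a b; rewrite !mxE (ord1 a) -powR_mulrn ?ltW //.
  by rewrite -powRD ?(lt0r_neq0 (mu_gt0 b)) ?implybT // /s addrC subrK.
apply: nnegmx_mul; last exact: nnegmx_powR_spectral_window s_in.
apply: nnegmx_exprn.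
by rewrite -B_spectral => i j; rewrite !mxE addr_ge0 ?ler0n // mulr_ge0 // ltW.
Qed.

End SmallPerturbation.

Theorem theorem5p1 (R : realType) (n : nat) (A : 'M[R]_n) :
  doubly_nonnegative A ->
  exists eps : R, 0 < eps /\
    forall t : R, n%:R - 2 <= t ->
      doubly_nonnegative (mpowr (eps *: A + 1%:M) t).
Proof.
case=> _ A_psd A_ge0.
have [dl dl_gt0 dl_le] :=
  exists_pos_lower_bound (fun p : 'I_n * 'I_n * 'I_n => (A ^+ p.1.1) p.1.2 p.2).
have K_gt0 : 0 < 1 + \tr A by rewrite ltr_wpDr ?ltr01 ?sumr_ge0.
have C_ge0 : 0 <= n%:R * (1 + \tr A) ^+ n.+1 * 3 ^+ n :> R.
  by rewrite !mulr_ge0 ?exprn_ge0 ?ler0n ?(ltW K_gt0).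
have [e [e_gt0 eK eC]] := exists_small_pos K_gt0 C_ge0 dl_gt0.
exists e; split => // t t_ge; rewrite /mpowr.
case: pselect => [/cid[[Q mu] /= [Q_orth mu_gt0 B_spectral]]|_]; last first.
  (* mpowr is 0 off positive definite matrices, which is doubly nonnegative *)
  by split=> [|x|i j]; rewrite ?trmx0 ?mulmx0 ?mul0mx ?mxE.
split=> [|x|]; first exact: trmx_spectral.
  by apply: spectral_form_ge0 => k; rewrite mxE powR_ge0.
apply: (nnegmx_powR_spectral A_psd A_ge0 Q_orth mu_gt0 e_gt0 B_spectral _ eK eC t_ge).
by move=> r i j; apply: (dl_le (r, i, j)).
Qed.
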